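(* Let $U$ be a nonempty finite set, $R\subseteq U\times U$ serial and transitive, and $r$ the rank function of $M(Reg(U,R))$. Then for every $X\in Reg(U,R)$ and every $e\in U\setminus X$, $r(X\cup\{e\})=h(X)+1$.
   Context: $R_s(x)=\{y\in U\mid xRy\}$; $\underline{R}(X)=\{x\mid R_s(x)\subseteq X\}$, $\overline{R}(X)=\{x\mid R_s(x)\cap X\neq\emptyset\}$; $X$ is regular if $X=\underline{R}(\overline{R}(X))$, and $Reg(U,R)$ is the lattice of regular sets under inclusion, with least element $\emptyset$. $h(A)$ is the length of a maximal chain in $[\emptyset,A]$. $M(Reg(U,R))$ is the matroid on $U$ with independent sets $\{X\subseteq U\mid h(Y)\ge|X\cap Y|\ \forall Y\in Reg(U,R)\}$ and rank function $r(X)=\max\{|I|\mid I\subseteq X \text{ independent}\}$. *)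

From mathcomp Require Import all_boot.
Set Implicit Arguments. Unset Strict Implicit. Unset Printing Implicit Defensive.

Section RoughSets.
Variables (U : finType) (R : rel U).

Definition Rs (x : U) : {set U} := [set y | R x y].

Definition lowerR (X : {set U}) : {set U} := [set x | Rs x \subset X].
Definition upperR (X : {set U}) : {set U} := [set x | Rs x :&: X != set0].

Definition regular (X : {set U}) : bool := X == lowerR (upperR X).

Definition reg_chain_below (A : {set U}) (C : {set {set U}}) : bool :=
  [forall Y in C, regular Y && (Y \subset A)] &&
  [forall Y in C, forall Z in C, (Y \subset Z) || (Z \subset Y)].

(* h(A): length (number of elements minus one) of a longest chain in the
   interval [set0, A] of the lattice Reg(U,R). *)
Definition h (A : {set U}) : nat :=
  (\max_(C : {set {set U}} | reg_chain_below A C) #|C|).-1.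

Definition reg_indep (X : {set U}) : bool :=
  [forall Y : {set U}, regular Y ==> (#|X :&: Y| <= h Y)].

Definition reg_rank (X : {set U}) : nat :=
  \max_(I : {set U} | (I \subset X) && reg_indep I) #|I|.

End RoughSets.

From mathcomp Require Import all_boot.
Set Implicit Arguments. Unset Strict Implicit. Unset Printing Implicit Defensive.

(* Call z terminal when every R-successor of z sees z back.  Every point sees
   a terminal point, and the terminal points fall into clusters with a common
   successor set; we fix one representative per cluster, forming the set reps.
   1. A regular set is determined by the representatives it contains, and every
      set of representatives arises this way, so Reg(U,R) is isomorphic to the
      Boolean lattice of subsets of reps and h(Y) = #|Y :&: reps|.
   2. An independent subset of e |: X has at most h(X)+1 elements, because its
      trace on the regular set X has at most h(X).
   3. e |: (X :&: reps) is independent: a regular set Y containing e is not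
      contained in X, so it contains a representative outside X, which makes
      room for e in the count #|Y :&: reps|. *)

Section RegularSets.
Variables (U : finType) (R : rel U).
Hypothesis serial_R : forall x : U, exists y : U, R x y.
Hypothesis trans_R : transitive R.

Lemma inRs x y : (y \in Rs R x) = R x y.
Proof. by rewrite inE. Qed.

Definition terminal (z : U) : bool := [forall w, R z w ==> R w z].

Lemma terminalP z w : terminal z -> R z w -> R w z.
Proof. by move=> /forallP /(_ w) /implyP. Qed.

Lemma terminal_refl z : terminal z -> R z z.
Proof. by move=> tz; have [w zw] := serial_R z; apply: trans_R (terminalP tz zw). Qed.

Lemma terminal_succ z w : terminal z -> R z w -> terminal w /\ Rs R w = Rs R z.
Proof.
move=> tz zw; have wz := terminalP tz zw; split.
  apply/forallP=> u; apply/implyP=> wu.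
  exact: trans_R (terminalP tz (trans_R zw wu)) _.
by apply/setP=> u; rewrite !inRs; apply/idP/idP; apply: trans_R.
Qed.

Lemma Rs_subset x y : R x y -> Rs R y \subset Rs R x.
Proof. by move=> xy; apply/subsetP=> u; rewrite !inRs; apply: trans_R. Qed.

(* Every point sees a terminal point: a successor w of y with a smallest
   successor set has all its successors sharing Rs w, and then any successor
   of w is terminal. *)
Lemma exists_terminal y : exists2 z, R y z & terminal z.
Proof.
have [w0 yw0] := serial_R y.
have [w yw wmin] := arg_minnP (fun w => #|Rs R w|) yw0.
have Rs_const u : R w u -> Rs R u = Rs R w.
  move=> wu; apply/eqP; rewrite eqEcard Rs_subset //=.
  exact: wmin (trans_R yw wu).
have [v wv] := serial_R w.
exists v; first exact: trans_R yw wv.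
apply/forallP=> u; apply/implyP=> vu.
by rewrite -inRs (Rs_const u (trans_R wv vu)) inRs.
Qed.

Lemma lower_upperP W x : x \in lowerR R (upperR R W) <->
  (forall z, R x z -> terminal z -> Rs R z :&: W != set0).
Proof.
rewrite inE; split=> [/subsetP sub z xz _ | Hx].
  by have := sub z; rewrite inRs inE; apply.
apply/subsetP=> y; rewrite inRs inE => xy.
have [z yz tz] := exists_terminal y.
have /set0Pn [u] := Hx z (trans_R xy yz) tz.
rewrite inE inRs => /andP[zu uW]; apply/set0Pn; exists u.
by rewrite inE uW inRs (trans_R yz zu).
Qed.

Definition regularize (S : {set U}) : {set U} := lowerR R (upperR R S).

Lemma regularize_terminal S z : terminal z ->
  (z \in regularize S) = (Rs R z :&: S != set0).
Proof.
move=> tz; apply/idP/idP => [/lower_upperP Hz | meet].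
  exact: Hz z (terminal_refl tz) tz.
by apply/lower_upperP => w zw _; have [_ ->] := terminal_succ tz zw.
Qed.

Lemma regular_terminal Z z : regular R Z -> terminal z ->
  (z \in Z) = (Rs R z :&: Z != set0).
Proof. by move=> /eqP {1}->; apply: regularize_terminal. Qed.

Lemma regularize_regular S : regular R (regularize S).
Proof.
have cluster_meet z : terminal z ->
    (Rs R z :&: regularize S != set0) = (Rs R z :&: S != set0).
  move=> tz; rewrite -(regularize_terminal S tz); apply/set0Pn/idP => [[u]|zS].
    rewrite inE inRs => /andP[zu]; have [tu eq_Rs] := terminal_succ tz zu.
    by rewrite !regularize_terminal // eq_Rs.
  by exists z; rewrite inE inRs terminal_refl.
apply/eqP/setP => x; apply/idP/idP => /lower_upperP Hx; apply/lower_upperP => z xz tz.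
  by rewrite cluster_meet // Hx.
by rewrite -cluster_meet // Hx.
Qed.

Definition rep (z : U) : U := odflt z [pick w in Rs R z].

(* The representatives: one terminal point per cluster. *)
Definition reps : {set U} := [set r | terminal r && (rep r == r)].

Lemma reps_terminal r : r \in reps -> terminal r.
Proof. by rewrite inE => /andP[]. Qed.

Lemma rep_succ z : terminal z -> R z (rep z).
Proof.
move=> tz; rewrite /rep; case: pickP => [w | /(_ z)] /=; first by rewrite inRs.
by rewrite inRs terminal_refl.
Qed.

Lemma rep_Rs z w : terminal z -> Rs R w = Rs R z -> rep w = rep z.
Proof.
move=> tz eq_Rs; rewrite /rep eq_Rs; case: pickP => //= /(_ z).
by rewrite inRs terminal_refl.
Qed.

Lemma rep_in_reps z : terminal z -> rep z \in reps.
Proof.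
move=> tz; have [t_rz eq_Rs] := terminal_succ tz (rep_succ tz).
by rewrite inE t_rz (rep_Rs tz eq_Rs) /=.
Qed.

Lemma reps_succ_eq r s : r \in reps -> s \in reps -> R r s -> r = s.
Proof.
rewrite !inE => /andP[tr /eqP rep_r] /andP[_ /eqP rep_s] rs.
by have [_ eq_Rs] := terminal_succ tr rs; rewrite -rep_r -rep_s (rep_Rs tr eq_Rs).
Qed.

Lemma regular_subset_reps Z Z' : regular R Z -> regular R Z' ->
  Z :&: reps \subset Z' -> Z \subset Z'.
Proof.
move=> regZ regZ' sub; apply/subsetP=> x xZ.
rewrite (eqP regZ'); apply/lower_upperP => z xz tz.
have [t_rz eq_Rs] := terminal_succ tz (rep_succ tz).
have rzZ : rep z \in Z.
  rewrite (regular_terminal regZ t_rz) eq_Rs.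
  by have := xZ; rewrite {1}(eqP regZ) => /lower_upperP; apply.
apply/set0Pn; exists (rep z); rewrite inE inRs rep_succ //=.
by apply: (subsetP sub); rewrite inE rzZ rep_in_reps.
Qed.

Lemma regular_eq_reps Z Z' : regular R Z -> regular R Z' -> Z \subset Z' ->
  #|Z :&: reps| = #|Z' :&: reps| -> Z = Z'.
Proof.
move=> regZ regZ' sZZ' eq_card; apply/eqP; rewrite eqEsubset sZZ'.
apply: regular_subset_reps => //.
have /eqP <- : Z :&: reps == Z' :&: reps by rewrite eqEcard setSI //= eq_card.
exact: subsetIl.
Qed.

Lemma regularize_reps (S : {set U}) : S \subset reps -> regularize S :&: reps = S.
Proof.
move=> Sreps; apply/setP => r; rewrite inE.
have [r_reps | r_reps] := boolP (r \in reps); last first.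
  by rewrite andbF; apply/esym; apply: contraNF r_reps; apply: (subsetP Sreps).
rewrite andbT regularize_terminal ?reps_terminal //.
apply/set0Pn/idP => [[s] | rS]; last first.
  by exists r; rewrite inE inRs terminal_refl ?reps_terminal.
rewrite inE inRs => /andP[rs sS].
by rewrite (reps_succ_eq r_reps (subsetP Sreps _ sS) rs).
Qed.

(* A chain of regular sets below Y has at most #|Y :&: reps| + 1 elements:
   inside a chain, a regular set is determined by its number of
   representatives. *)
Lemma chain_card_le Y C : reg_chain_below R Y C -> #|C| <= #|Y :&: reps|.+1.
Proof.
move=> /andP[/forall_inP in_C /forall_inP comparable].
set n := #|Y :&: reps|.
have bound Z : Z \in C -> #|Z :&: reps| < n.+1.
  by move=> /in_C /andP[_ sZY]; rewrite ltnS subset_leq_card // setSI.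
rewrite -[n.+1]card_ord.
apply: (@leq_card_in _ _ (fun Z => inord #|Z :&: reps| : 'I_n.+1)).
move=> Z Z' ZC Z'C /(congr1 val); rewrite /= !inordK ?bound // => eq_card.
have /andP[regZ _] := in_C _ ZC; have /andP[regZ' _] := in_C _ Z'C.
have /forall_inP /(_ _ Z'C) /orP[sZZ' | sZ'Z] := comparable _ ZC.
  exact: regular_eq_reps.
exact/esym/regular_eq_reps.
Qed.

Definition first_reps (Y : {set U}) (k : nat) : {set U} :=
  [set x in take k (enum (Y :&: reps))].

Lemma first_reps_sub Y k : first_reps Y k \subset Y :&: reps.
Proof. by apply/subsetP => x; rewrite inE => /mem_take; rewrite mem_enum. Qed.

Lemma first_reps_mono Y k l : k <= l -> first_reps Y k \subset first_reps Y l.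
Proof.
by move=> kl; apply/subsetP => x; rewrite !inE -(take_takel _ kl); apply: mem_take.
Qed.

Lemma card_first_reps Y k : k <= #|Y :&: reps| -> #|first_reps Y k| = k.
Proof.
move=> k_le; rewrite cardsE (card_uniqP _) ?take_uniq ?enum_uniq //.
rewrite size_take -cardE; case: ltnP => // le_k.
by apply/eqP; rewrite eqn_leq le_k k_le.
Qed.

(* Regularizing the first k representatives of Y, k = 0 .. #|Y :&: reps|,
   gives a chain of regular sets below Y of length #|Y :&: reps| + 1. *)
Lemma chain_card_ge Y : regular R Y ->
  exists2 C, reg_chain_below R Y C & #|C| = #|Y :&: reps|.+1.
Proof.
move=> regY; set n := #|Y :&: reps|.
pose Z (k : 'I_n.+1) := regularize (first_reps Y k).
have Z_reps k : Z k :&: reps = first_reps Y k.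
  exact/regularize_reps/(subset_trans (first_reps_sub Y k))/subsetIr.
have Z_mono (k l : 'I_n.+1) : k <= l -> Z k \subset Z l.
  move=> kl; apply: regular_subset_reps; rewrite ?regularize_regular // Z_reps.
  by apply: subset_trans (first_reps_mono Y kl) _; rewrite -Z_reps subsetIl.
exists [set Z k | k : 'I_n.+1]; last first.
  rewrite card_imset ?card_ord // => k l eq_Z; apply/val_inj.
  rewrite /= -(card_first_reps (ltnSE (ltn_ord k))).
  by rewrite -(card_first_reps (ltnSE (ltn_ord l))) -!Z_reps eq_Z.
apply/andP; split; apply/forall_inP => _ /imsetP[k _ ->].
  rewrite regularize_regular; apply: regular_subset_reps => //.
    exact: regularize_regular.
  by rewrite Z_reps (subset_trans (first_reps_sub Y k)) ?subsetIl.
apply/forall_inP => _ /imsetP[l _ ->].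
by case: (leqP k l) => [/Z_mono -> | /ltnW/Z_mono ->]; rewrite ?orbT.
Qed.

(* Reg(U,R) is a Boolean lattice over the representatives, so the height of
   a regular set is its number of representatives. *)
Lemma h_reps Y : regular R Y -> h R Y = #|Y :&: reps|.
Proof.
move=> regY; rewrite /h (_ : \max_(C : {set {set U}} | reg_chain_below R Y C) #|C| = #|Y :&: reps|.+1) //.
apply/eqP; rewrite eqn_leq; apply/andP; split.
  by apply/bigmax_leqP => C; apply: chain_card_le.
by have [C chainC <-] := chain_card_ge regY; apply: leq_bigmax_cond.
Qed.

(* An independent subset of e |: X has at most h(X) + 1 elements, since at
   most h(X) of them lie in the regular set X. *)
Lemma indep_card_le X e I : regular R X -> reg_indep R I ->
  I \subset e |: X -> #|I| <= (h R X).+1.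
Proof.
move=> regX /forallP indepI sI.
have le_hX : #|I :&: X| <= h R X by have := indepI X; rewrite regX.
apply: (@leq_trans #|e |: (I :&: X)|).
  by apply/subset_leq_card/subsetP => x xI; move: (subsetP sI x xI); rewrite !inE xI.
by rewrite cardsU1 -add1n leq_add ?leq_b1.
Qed.

(* Adding a point e outside a regular set X to the representatives of X gives
   an independent set: a regular Y containing e is not contained in X, so it
   has a representative outside X. *)
Lemma extension_indep X e : regular R X -> e \notin X ->
  reg_indep R (e |: (X :&: reps)).
Proof.
move=> regX eX; apply/forallP => Y; apply/implyP => regY; rewrite h_reps //.
have [eY | eY] := boolP (e \in Y); last first.
  apply/subset_leq_card/subsetP => x; rewrite !inE.
  by case/andP => /orP[/eqP -> | /andP[_ ->]]; rewrite ?(negbTE eY) // => ->.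
have [r rY rX] : exists2 r, r \in Y :&: reps & r \notin X.
  apply/subsetPn; apply: contra eX => sub.
  exact: subsetP (regular_subset_reps regY regX sub) e eY.
apply: (@leq_trans #|e |: (X :&: reps :&: Y)|).
  by apply: subset_leq_card; rewrite setIUl setSU ?subsetIl.
rewrite cardsU1; apply: leq_trans (leq_add (leq_b1 _) (leqnn _)) _.
rewrite add1n; apply: proper_card; apply/properP; split.
  by apply/subsetP => x; rewrite !inE => /andP[/andP[_ ->] ->].
by exists r; rewrite // !inE (negbTE rX).
Qed.

End RegularSets.

Theorem proposition6 (U : finType) (R : rel U)
  (hne : 0 < #|U|)
  (hser : forall x : U, exists y : U, R x y)
  (htr : transitive R)
  (X : {set U}) (hX : regular R X) (e : U) (he : e \notin X) :
  reg_rank R (e |: X) = (h R X).+1.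
Proof.
apply/eqP; rewrite eqn_leq; apply/andP; split.
  by apply/bigmax_leqP => I /andP[sI indepI]; apply: indep_card_le hX indepI sI.
have card_ext : #|e |: (X :&: reps R)| = (h R X).+1.
  by rewrite cardsU1 inE (negbTE he) (h_reps hser htr hX).
rewrite -card_ext /reg_rank; apply: leq_bigmax_cond.
by rewrite extension_indep // setUS ?subsetIl.
Qed.
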